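(* Let $\mathcal{E}=(E,\vdash)$ be an event structure and let $C$ be its set of left-closed configurations. Then: (1) if $\mathcal{E}$ is singular, $C$ is closed under bounded unions; (2) if $\mathcal{E}$ is conjunctive, $C$ is closed under nonempty intersections; (3) if $\mathcal{E}$ is locally conjunctive, $C$ is closed under bounded nonempty intersections; (4) if $\mathcal{E}$ has finite conflict, so does $(E,C)$; (5) if $\mathcal{E}$ has binary conflict, so does $(E,C)$; (6) if $\mathcal{E}$ is singular and has finite conflict, $C$ is closed under finitely consistent unions; (7) if $\mathcal{E}$ is singular and has binary conflict, $C$ is closed under pairwise consistent unions; (8) if $\mathcal{E}$ is locally conjunctive and has finite conflict, $C$ is closed under finitely consistent nonempty intersections; (9) if $\mathcal{E}$ is locally conjunctive and has binary conflict, $C$ is closed under pairwise consistent nonempty intersections.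
   Context: An event structure is $(E,\vdash)$ with $\vdash\subseteq\mathcal{P}(E)\times\mathcal{P}(E)$; $X\subseteq E$ is a left-closed configuration iff for all $Y\subseteq X$ there is $Z\subseteq X$ with $Z\vdash Y$. For the event structure write $\mathrm{Con}(X)$ iff for every $Y\subseteq X$ there is $Z\subseteq E$ with $Z\vdash Y$. The event structure is singular if $X\vdash Y$ implies $X=\emptyset$ or $|Y|=1$; conjunctive if whenever $X_i\vdash Y$ for all $i\in I\neq\emptyset$ then $\bigcap_{i}X_i\vdash Y$; locally conjunctive if whenever $X_i\vdash Y$ for all $i\in I\ne\emptyset$ and $\mathrm{Con}(\bigcup_iX_i\cup Y)$ then $\bigcap_iX_i\vdash Y$; it has finite conflict if $\emptyset\vdash X$ for every infinite $X$; binary conflict if $\emptyset\vdash X$ for every $X$ with $|X|>2$. For a configuration structure $(E,C)$ ($C\subseteq\mathcal{P}(E)$): $X$ is consistent, $\mathrm{Con}_C(X)$, if $X\subseteq z$ for some $z\in C$; finitely consistent if every finite subset is consistent; pairwise consistent if every subset of size $\le2$ is consistent. $C$ is closed under bounded unions if $A\subseteq C$ and $\bigcup A$ consistent imply $\bigcup A\in C$; under nonempty intersections if $\emptyset\ne A\subseteq C$ implies $\bigcap A\in C$; under bounded nonempty intersections if $\emptyset\ne A\subseteq C$ and $\bigcup A$ consistent imply $\bigcap A\in C$; under finitely (resp. pairwise) consistent unions if $A\subseteq C$ and $\bigcup A$ finitely (resp. pairwise) consistent imply $\bigcup A\in C$; under finitely (resp. pairwise) consistent nonempty intersections if $\emptyset\ne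 A\subseteq C$ and $\bigcup A$ finitely (resp. pairwise) consistent imply $\bigcap A\in C$. $(E,C)$ has finite conflict if, for every $X\subseteq E$, whenever every finite $Y\subseteq X$ satisfies $Y\subseteq z\subseteq X$ for some $z\in C$, then $X\in C$; it has binary conflict if the same holds with ''finite $Y$'' replaced by ''$Y$ with $|Y|\le2$''. *)

From mathcomp Require Import all_boot.
From mathcomp Require Import boolp classical_sets cardinality.

Set Implicit Arguments.
Unset Strict Implicit.
Unset Printing Implicit Defensive.

Local Open Scope classical_set_scope.

Definition enabling (E : Type) := set E -> set E -> Prop.

Definition atmost2 (E : Type) (X : set E) : Prop :=
  forall a b c, X a -> X b -> X c -> a = b \/ a = c \/ b = c.

Section EventStructures.
Variable E : Type.
Implicit Types (ent : enabling E) (X Y Z : set E) (C A : set (set E)).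

Definition lconf ent X : Prop :=
  forall Y, Y `<=` X -> exists Z, Z `<=` X /\ ent Z Y.

Definition Con ent X : Prop := forall Y, Y `<=` X -> exists Z, ent Z Y.

Definition singular ent : Prop :=
  forall X Y, ent X Y -> X = set0 \/ exists y, Y = [set y].

(* families {X_i}_{i in I}, I nonempty, are represented by nonempty sets of sets *)
Definition conjunctive ent : Prop :=
  forall (F : set (set E)) Y, F !=set0 -> (forall X, F X -> ent X Y) ->
    ent (\bigcap_(X in F) X) Y.

Definition locally_conjunctive ent : Prop :=
  forall (F : set (set E)) Y, F !=set0 -> (forall X, F X -> ent X Y) ->
    Con ent ((\bigcup_(X in F) X) `|` Y) ->
    ent (\bigcap_(X in F) X) Y.

Definition es_finite_conflict ent : Prop :=
  forall X, ~ finite_set X -> ent set0 X.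

Definition es_binary_conflict ent : Prop :=
  forall X, ~ atmost2 X -> ent set0 X.

Definition ConC C X : Prop := exists z, C z /\ X `<=` z.

Definition fin_consistent C X : Prop :=
  forall Y, Y `<=` X -> finite_set Y -> ConC C Y.

Definition pair_consistent C X : Prop :=
  forall Y, Y `<=` X -> atmost2 Y -> ConC C Y.

Definition closed_bounded_unions C : Prop :=
  forall A, A `<=` C -> ConC C (\bigcup_(x in A) x) -> C (\bigcup_(x in A) x).

Definition closed_nonempty_intersections C : Prop :=
  forall A, A !=set0 -> A `<=` C -> C (\bigcap_(x in A) x).

Definition closed_bounded_nonempty_intersections C : Prop :=
  forall A, A !=set0 -> A `<=` C -> ConC C (\bigcup_(x in A) x) ->
    C (\bigcap_(x in A) x).

Definition closed_fin_consistent_unions C : Prop :=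
  forall A, A `<=` C -> fin_consistent C (\bigcup_(x in A) x) ->
    C (\bigcup_(x in A) x).

Definition closed_pair_consistent_unions C : Prop :=
  forall A, A `<=` C -> pair_consistent C (\bigcup_(x in A) x) ->
    C (\bigcup_(x in A) x).

Definition closed_fin_consistent_nonempty_intersections C : Prop :=
  forall A, A !=set0 -> A `<=` C -> fin_consistent C (\bigcup_(x in A) x) ->
    C (\bigcap_(x in A) x).

Definition closed_pair_consistent_nonempty_intersections C : Prop :=
  forall A, A !=set0 -> A `<=` C -> pair_consistent C (\bigcup_(x in A) x) ->
    C (\bigcap_(x in A) x).

Definition cs_finite_conflict C : Prop :=
  forall X, (forall Y, Y `<=` X -> finite_set Y ->
               exists z, C z /\ Y `<=` z /\ z `<=` X) -> C X.

Definition cs_binary_conflict C : Prop :=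
  forall X, (forall Y, Y `<=` X -> atmost2 Y ->
               exists z, C z /\ Y `<=` z /\ z `<=` X) -> C X.

End EventStructures.

From mathcomp Require Import all_boot.
From mathcomp Require Import boolp classical_sets cardinality.

(* A set Y below a union of configurations is enabled from inside the union:
   by singularity Y is empty-enabled or a singleton, and a singleton lies in
   one member, which enables it.  For an intersection, intersect the enabling
   sets chosen in each member; (local) conjunctivity says the result still
   enables Y, and it lies in every member.  Finite (binary) conflict makes
   every set that is not finite (of size at most 2) enabled from the empty
   set, so only the small subsets need to be checked, and those are covered
   by the finite (pairwise) consistency hypothesis. *)

Local Open Scope classical_set_scope.

Section LeftClosedConfigurations.
Variables (E : Type) (ent : enabling E).
Implicit Types (X Y U : set E) (A : set (set E)) (P : set E -> Prop).

Definition conjunctive_within U : Prop :=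
  forall (F : set (set E)) Y, F !=set0 -> (forall X, F X -> ent X Y) ->
    (\bigcup_(X in F) X) `|` Y `<=` U -> ent (\bigcap_(X in F) X) Y.

Lemma conjunctive_within_all U : conjunctive ent -> conjunctive_within U.
Proof. by move=> cj F Y F0 FY _; exact: cj. Qed.

Lemma Con_subset X Y : Con ent X -> Y `<=` X -> Con ent Y.
Proof. by move=> hX YX W WY; exact: hX (subset_trans WY YX). Qed.

Lemma locally_conjunctive_within U :
  locally_conjunctive ent -> Con ent U -> conjunctive_within U.
Proof.
by move=> lc hU F Y F0 FY FYU; apply: lc => //; exact: Con_subset FYU.
Qed.

Lemma Con_bounded X : ConC (lconf ent) X -> Con ent X.
Proof.
move=> [z [hz Xz]] Y YX.
by have [Z [_ hZ]] := hz Y (subset_trans YX Xz); exists Z.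
Qed.

Lemma Con_small_consistent P X :
  (forall Y, ~ P Y -> ent set0 Y) ->
  (forall Y, Y `<=` X -> P Y -> ConC (lconf ent) Y) -> Con ent X.
Proof.
move=> conflict hX Y YX.
have [PY|nPY] := pselect (P Y); last by exists set0; exact: conflict.
exact: Con_bounded (hX Y YX PY) Y (@subset_refl _ Y).
Qed.

Lemma lconf_small_covered P X :
  (forall Y, ~ P Y -> ent set0 Y) ->
  (forall Y, Y `<=` X -> P Y -> exists z, lconf ent z /\ Y `<=` z /\ z `<=` X) ->
  lconf ent X.
Proof.
move=> conflict hX Y YX.
have [PY|nPY] := pselect (P Y); last first.
  by exists set0; split; [exact: sub0set | exact: conflict].
have [z [hz [Yz zX]]] := hX Y YX PY.
have [Z [Zz hZ]] := hz Y Yz.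
by exists Z; split => //; exact: subset_trans zX.
Qed.

Lemma lconf_bigcup A : singular ent -> A `<=` lconf ent ->
  Con ent (\bigcup_(x in A) x) -> lconf ent (\bigcup_(x in A) x).
Proof.
move=> sg AC hU Y YU.
have [Z hZ] := hU Y YU.
have [Z0|[y Yy]] := sg _ _ hZ; first by exists Z; split; [rewrite Z0; exact: sub0set|].
have [x Ax xy] : (\bigcup_(x in A) x) y by apply: YU; rewrite Yy.
have Yx : Y `<=` x by rewrite Yy => w ->.
have [Z' [Z'x hZ']] := AC x Ax Y Yx.
by exists Z'; split => // w /Z'x xw; exists x.
Qed.

Lemma lconf_bigcap A : A !=set0 -> A `<=` lconf ent ->
  conjunctive_within (\bigcup_(x in A) x) -> lconf ent (\bigcap_(x in A) x).
Proof.
move=> [x0 Ax0] AC cj Y YI.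
have Yx x : A x -> Y `<=` x by move=> Ax w /YI; exact.
pose F := [set Z | exists2 x, A x & Z `<=` x /\ ent Z Y].
have F0 : F !=set0.
  by have [Z [Zx hZ]] := AC x0 Ax0 Y (Yx x0 Ax0); exists Z, x0.
exists (\bigcap_(X in F) X); split.
  move=> w Fw x Ax; have [Z [Zx hZ]] := AC x Ax Y (Yx x Ax).
  by apply: (Zx); apply: Fw; exists x.
apply: cj => //; first by move=> X [x _ []].
move=> w [[Z [x Ax [Zx _]] Zw]|Yw]; first by exists x => //; exact: Zx.
by exists x0 => //; exact: Yx.
Qed.

End LeftClosedConfigurations.

Theorem mainTheorem11 (E : Type) (ent : enabling E) :
  let C : set (set E) := lconf ent in
  (singular ent -> closed_bounded_unions C) /\
  (conjunctive ent -> closed_nonempty_intersections C) /\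
  (locally_conjunctive ent -> closed_bounded_nonempty_intersections C) /\
  (es_finite_conflict ent -> cs_finite_conflict C) /\
  (es_binary_conflict ent -> cs_binary_conflict C) /\
  (singular ent -> es_finite_conflict ent -> closed_fin_consistent_unions C) /\
  (singular ent -> es_binary_conflict ent -> closed_pair_consistent_unions C) /\
  (locally_conjunctive ent -> es_finite_conflict ent ->
     closed_fin_consistent_nonempty_intersections C) /\
  (locally_conjunctive ent -> es_binary_conflict ent ->
     closed_pair_consistent_nonempty_intersections C).
Proof.
move=> C; split; [|split; [|split; [|split; [|split; [|split; [|split; [|split]]]]]]].
- by move=> sg A AC hA; apply: lconf_bigcup => //; exact: Con_bounded.
- by move=> cj A A0 AC; apply: lconf_bigcap => //; exact: conjunctive_within_all.
- move=> lc A A0 AC hA; apply: lconf_bigcap => //.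
  by apply: locally_conjunctive_within => //; exact: Con_bounded.
- by move=> fc X; exact: lconf_small_covered fc.
- by move=> bc X; exact: lconf_small_covered bc.
- by move=> sg fc A AC hA; apply: lconf_bigcup => //; exact: Con_small_consistent hA.
- by move=> sg bc A AC hA; apply: lconf_bigcup => //; exact: Con_small_consistent hA.
- move=> lc fc A A0 AC hA; apply: lconf_bigcap => //.
  by apply: locally_conjunctive_within => //; exact: Con_small_consistent hA.
- move=> lc bc A A0 AC hA; apply: lconf_bigcap => //.
  by apply: locally_conjunctive_within => //; exact: Con_small_consistent hA.
Qed.
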